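(* Let $r\ge 1$ be an integer and let $Z(r)$ be the Young–Fibonacci $r$-differential poset. Write $p_n$ for the number of elements of rank $n$ in $Z(r)$, with $p_k:=0$ for $k<0$, and $\Delta p_n:=p_n-p_{n-1}$. Then: (1) for every $n\ge 0$, the matrix $DU_n+tI$ in $\mathbb{Z}[t]^{p_n\times p_n}$ has a Smith form over $\mathbb{Z}[t]$; (2) for every $n\ge 1$ and every $1\le j\le n$ one has $\Delta p_n\ge \Delta p_{n-j-\delta_{r,1}}$ (i.e. $\Delta p_n\ge\Delta p_{n-j-1}$ if $r=1$, and $\Delta p_n\ge \Delta p_{n-j}$ if $r\ge 2$); (3) for every $n\ge 0$, the cokernel of $U_n:\mathbb{Z}^{p_n}\to\mathbb{Z}^{p_{n+1}}$ is a free abelian group.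
   Context: $Z(r)$ is the set of all finite words in the alphabet $\{1_1,1_2,\dots,1_r,2\}$; the rank of a word is the sum of its letters, where each $1_i$ has value $1$ and $2$ has value $2$ (the empty word is the minimum, of rank $0$). A word $w$ covers a word $w'$ if either (a) $w'$ is obtained from $w$ by changing a letter $2$ into some $1_i$, provided only letters $2$ occur to the left of it, or (b) $w'$ is obtained from $w$ by deleting its first (leftmost) letter of the form $1_i$. This is an $r$-differential poset. For a graded poset $P$ with rank sets $P_n$, $p_n=|P_n|$, the up map $U_n:\mathbb{Z}^{P_n}\to\mathbb{Z}^{P_{n+1}}$ sends each basis element $x$ to the sum of all elements covering $x$, and the down map $D_n:\mathbb{Z}^{P_n}\to\mathbb{Z}^{P_{n-1}}$ sends $x$ to the sum of all elements covered by $x$ (so $D_{n+1}=U_n^t$); $DU_n:=D_{n+1}U_n$, viewed as a $p_n\times p_n$ integer matrix in the basis $P_n$. A matrix $B$ over a commutative ring $S$ is in Smith form if it is diagonal (off-diagonal entries zero) with diagonal entries $s_1,s_2,\dots$ such that $s_i$ divides $s_{i+1}$ in $S$ for all $i$; $B$ has a Smith form over $S$ if $PBQ$ is in Smith form for some invertible matrices $P,Q$ over $S$. *)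

From HB Require Import structures.
From mathcomp Require Import all_boot all_order all_algebra.
Set Implicit Arguments. Unset Strict Implicit. Unset Printing Implicit Defensive.
Import Order.TTheory GRing.Theory Num.Theory.

(* Letters of Z(r): [Some i] is the letter 1_i (value 1), [None] is the letter 2. *)
Definition letter (r : nat) := option 'I_r.
Definition two {r : nat} : letter r := None.
Definition one {r : nat} (i : 'I_r) : letter r := Some i.

Definition lval {r : nat} (a : letter r) : nat := if a is Some _ then 1 else 2.

Definition rank {r : nat} (w : seq (letter r)) : nat := \sum_(a <- w) lval a.

Definition words_upto (r n : nat) : seq (seq (letter r)) :=
  flatten [seq [seq val t | t <- enum {: k.-tuple (letter r)}] | k <- iota 0 n.+1].

(* P_n : the words of rank n (every word of rank n has length <= n),
   listed without repetition; this fixes the basis order of Z^{P_n}. *)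
Definition Pn (r n : nat) : seq (seq (letter r)) :=
  [seq w <- words_upto r n | rank w == n].

Definition p (r n : nat) : nat := size (Pn r n).

Definition covers {r : nat} (w w' : seq (letter r)) : bool :=
  (* (a) change a letter 2, preceded only by 2's, into some 1_i *)
  [exists i : 'I_r, has (fun k =>
      (w == nseq k two ++ two :: drop k.+1 w) &&
      (w' == nseq k two ++ one i :: drop k.+1 w)) (iota 0 (size w))]
  ||
  (* (b) delete the leftmost letter of the form 1_i *)
  [exists i : 'I_r, has (fun k =>
      (w == nseq k two ++ one i :: drop k.+1 w) &&
      (w' == nseq k two ++ drop k.+1 w)) (iota 0 (size w))].

Local Open Scope ring_scope.

Definition Umx (r n : nat) : 'M[int]_(p r n.+1, p r n) :=
  \matrix_(y < p r n.+1, x < p r n)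
    (covers (nth [::] (Pn r n.+1) y) (nth [::] (Pn r n) x) : int).

(* D_{n+1} = U_n^T,  DU_n = D_{n+1} U_n. *)
Definition DUmx (r n : nat) : 'M[int]_(p r n) := (Umx r n)^T *m Umx r n.

Definition DUt (r n : nat) : 'M[{poly int}]_(p r n) :=
  map_mx polyC (DUmx r n) + 'X%:M.

Definition rdvd {S : comUnitRingType} (a b : S) : Prop := exists c : S, b = c * a.

Definition is_smith_form {S : comUnitRingType} {m : nat} (B : 'M[S]_m) : Prop :=
  (forall i j : 'I_m, i != j -> B i j = 0) /\
  (forall i j : 'I_m, j = i.+1 :> nat -> rdvd (B i i) (B j j)).

Definition has_smith_form {S : comUnitRingType} {m : nat} (B : 'M[S]_m) : Prop :=
  exists P Q : 'M[S]_m, P \in unitmx /\ Q \in unitmx /\ is_smith_form (P *m B *m Q).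

(* The cokernel Z^m / A Z^n of A : Z^n -> Z^m is free abelian: there is a
   surjective homomorphism F : Z^m -> Z^k whose kernel is exactly the image
   of A (so coker A ~= Z^k). *)
Definition coker_free {m n : nat} (A : 'M[int]_(m, n)) : Prop :=
  exists k : nat, exists F : 'M[int]_(k, m),
    (forall y : 'cV[int]_k, exists x : 'cV[int]_m, F *m x = y) /\
    (forall x : 'cV[int]_m, F *m x = 0 <-> exists v : 'cV[int]_n, x = A *m v).

Definition pz (r : nat) (k : int) : int :=
  match k with Posz k' => (p r k')%:Z | Negz _ => 0 end.
Definition dp (r : nat) (k : int) : int := pz r k - pz r (k - 1).

From mathcomp Require Import all_boot all_order all_algebra zify ring.
Set Implicit Arguments. Unset Strict Implicit. Unset Printing Implicit Defensive.
Import Order.TTheory GRing.Theory Num.Theory.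

(* List the words of rank n+1 as 1_1 w, ..., 1_r w (w of rank n), followed by
   2 v (v of rank n-1).  A word 1_i w covers only w, and 2 v covers x iff x
   covers v, so in these bases U_n is the column (I; ...; I; U_{n-1}^T) with r
   identity blocks.  This gives at once a free cokernel (part 3), the recursion
   p_{n+2} = r p_{n+1} + p_n behind part 2, and
   DU_n + t = (t + r) I + U_{n-1} U_{n-1}^T.
   For part 1, row and column operations show that c I + U U^T has a Smith
   form as soon as c I + U^T U does, provided U has two identity blocks on top
   (r >= 2); this closes an induction on n.  For r = 1 there is only one such
   block, and the same operations instead pass between the matrices
   [phi_mx d f V] below, using a Bezout relation between d and f. *)

Lemma covers_nil r (v : seq (letter r)) : covers [::] v = false.
Proof.
by rewrite /covers; apply/negbTE; rewrite negb_or; apply/andP; split; apply/existsP=> -[].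
Qed.

Lemma covers_cons_one r (i : 'I_r) (u v : seq (letter r)) :
  covers (one i :: u) v = (v == u).
Proof.
rewrite /covers /=.
have -> : [exists i0, ((one i :: u == two :: u) && (v == one i0 :: u))
   || has (fun k => (one i :: u == nseq k two ++ two :: drop k.+1 (one i :: u)) &&
      (v == nseq k two ++ one i0 :: drop k.+1 (one i :: u))) (iota 1 (size u))] = false.
  by apply/existsP=> -[i0] /orP[//|/hasP[k]]; rewrite mem_iota; case: k.
apply/existsP/eqP => [[i0]|->].
  case/orP=> [/andP[_ /eqP->]|/hasP[k]]; first by rewrite drop0.
  by rewrite mem_iota; case: k.
by exists i; rewrite drop0 !eqxx.
Qed.

Lemma has_iota1 (P : pred nat) n :
  has P (iota 1 n) = has (fun k => P k.+1) (iota 0 n).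
Proof. by rewrite (iotaDl 1 0) has_map; apply: eq_has => k; rewrite /preim /= add1n. Qed.

Lemma covers_cons_twoE r (z x : seq (letter r)) : covers (two :: z) x =
  [exists i, x == one i :: z] ||
  (if x is a :: x' then (a == two) && covers z x' else false).
Proof.
rewrite /covers /=.
under eq_existsb => i do rewrite has_iota1 drop0 eqxx /=.
under [X in _ || X]eq_existsb => i do rewrite has_iota1 /=.
apply/idP/idP.
  case/orP => [/existsP[i /orP[H|/hasP[k Hk /andP[Hz /eqP Hx]]]]
             | /existsP[i /hasP[k Hk /andP[Hz /eqP Hx]]]].
  - by apply/orP; left; apply/existsP; exists i.
  - rewrite Hx eqxx /=; apply/orP; right; apply/orP; left; apply/existsP; exists i.
    by apply/hasP; exists k => //; rewrite eqxx andbT; rewrite eqseq_cons in Hz.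
  - rewrite Hx eqxx /=; apply/orP; right; apply/orP; right; apply/existsP; exists i.
    by apply/hasP; exists k => //; rewrite eqxx andbT; rewrite eqseq_cons in Hz.
case/orP => [/existsP[i H]|].
  by apply/orP; left; apply/existsP; exists i; rewrite H.
case: x => [//|a x'] /andP[/eqP-> /orP[/existsP[i /hasP[k Hk /andP[Hz /eqP Hx]]]
                                     |/existsP[i /hasP[k Hk /andP[Hz /eqP Hx]]]]].
  apply/orP; left; apply/existsP; exists i; apply/orP; right; apply/hasP; exists k => //.
  by rewrite Hx !eqseq_cons !eqxx Hz.
apply/orP; right; apply/existsP; exists i; apply/hasP; exists k => //.
by rewrite Hx !eqseq_cons !eqxx Hz.
Qed.

(* This duality is what makes U_{n-1}^T reappear inside U_n. *)
Lemma covers_cons_two r (z x : seq (letter r)) : covers (two :: z) x = covers x z.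
Proof.
have [N] := ubnP (size z + size x); elim: N z x => [//|N IH] z x.
case: x => [|[j|] u] Hs.
- by rewrite covers_cons_twoE covers_nil orbF; apply/negbTE/existsP=> -[].
- change (Some j :: u) with (one j :: u).
  rewrite covers_cons_twoE covers_cons_one /= orbF.
  by apply/existsP/eqP=> [[i /eqP[_ ->]]|->] //; exists j.
- change (None :: u) with (two :: u); rewrite covers_cons_twoE IH /=.
    suff -> : [exists i, two :: u == one i :: z] = false by [].
    by apply/existsP=> -[].
  by move: Hs; rewrite /= addnS addnC.
Qed.

(* From here on r = r'.+1, so the letters are 1_0, ..., 1_r' and 2.
   [stack_rows c a b] is c * a + b, computed by the recursion that makes it
   the row count of [stack_mx] below by conversion. *)
Fixpoint stack_rows (c a b : nat) : nat :=
  if c is c'.+1 then (a + stack_rows c' a b)%N else b.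

Fixpoint nwords2 (r' n : nat) : nat * nat :=
  if n is m.+1 then ((nwords2 r' m).2,
                     (nwords2 r' m).2 + stack_rows r' (nwords2 r' m).2 (nwords2 r' m).1)%N
  else (0, 1)%N.
Definition nwords r' n := (nwords2 r' n).2.
Definition nwords_pred r' n := (nwords2 r' n).1.

Fixpoint words_tail (r' j c : nat) (ws vs : seq (seq (letter r'.+1))) :=
  if c is c'.+1 then map (cons (one (inord j))) ws ++ words_tail j.+1 c' ws vs
  else map (cons two) vs.

Fixpoint words2 (r' n : nat) : seq (seq (letter r'.+1)) * seq (seq (letter r'.+1)) :=
  if n is m.+1 then
    ((words2 r' m).2, map (cons (one ord0)) (words2 r' m).2 ++
                      words_tail 1 r' (words2 r' m).2 (words2 r' m).1)
  else ([::], [:: [::]]).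
Definition words r' n := (words2 r' n).2.
Definition words_pred r' n := (words2 r' n).1.

Lemma size_words_tail r' j c ws vs :
  size (@words_tail r' j c ws vs) = stack_rows c (size ws) (size vs).
Proof. by elim: c j => [|c IH] j /=; rewrite ?size_map // size_cat size_map IH. Qed.

Lemma size_words r' n :
  size (words r' n) = nwords r' n /\ size (words_pred r' n) = nwords_pred r' n.
Proof.
elim: n => [|n [IH1 IH2]] //; rewrite /words /words_pred /nwords /nwords_pred /=.
by rewrite size_cat size_map size_words_tail -/(words r' n) -/(words_pred r' n) IH1 IH2.
Qed.

Lemma mem_words_tail r' j c ws vs w : (j + c <= r'.+1)%N ->
  (w \in @words_tail r' j c ws vs) =
  match w with
  | [::] => false
  | Some i :: u => (j <= i < j + c)%N && (u \in ws)
  | None :: z => z \in vs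
  end.
Proof.
elim: c j w => [|c IH] j w Hc.
  rewrite /words_tail; case: w => [|[i|] u].
  - by apply/mapP=> -[].
  - rewrite addn0; have -> : (j <= i < j)%N = false by case: leqP => //= H; rewrite ltnNge H.
    by apply/mapP=> -[x _ [/eqP]].
  - by rewrite mem_map // => x y [].
rewrite /= mem_cat IH ?addSnnS //.
case: w => [|[i|] u].
- by rewrite orbF; apply/mapP=> -[].
- have -> : (Some i :: u \in map (cons (one (inord j))) ws) = (i == j :> nat) && (u \in ws).
    apply/mapP/andP=> [[x Hx [-> ->]]|[/eqP Hi Hu]]; first by rewrite inordK ?Hx //; lia.
    by exists u => //; congr (Some _ :: _); apply/val_inj; rewrite /= inordK //; lia.
  case: (u \in ws); rewrite ?andbF ?andbT ?orbF //.
  apply/idP/idP; [case/orP=> [/eqP->|/andP[H1 H2]]|move=> /andP[H1 H2]]; try (apply/andP; lia).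
  by apply/orP; case: (ltngtP i j) => H; [lia|right; apply/andP; lia|left; apply/eqP].
- by have -> : (None :: u \in map (cons (one (inord j))) ws) = false by apply/mapP=> -[].
Qed.

Lemma uniq_words_tail r' j c ws vs : (j + c <= r'.+1)%N -> uniq ws -> uniq vs ->
  uniq (@words_tail r' j c ws vs).
Proof.
move=> + Uws Uvs; elim: c j => [|c IH] j Hc /=.
  by rewrite map_inj_uniq // => x y [].
rewrite cat_uniq map_inj_uniq ?IH ?addSnnS ?Uws // ?andbT /=; last by move=> x y [].
apply/hasPn => w; rewrite mem_words_tail ?addSnnS //.
case: w => [|[i|] u] //.
  case/andP=> Hi _; apply/mapP=> -[x _ [Hx _]].
  by move: Hi; rewrite Hx inordK ?ltnn //; lia.
by move=> _; apply/mapP=> -[].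
Qed.

Lemma mem_wordsS r' n w : (w \in words r' n.+1) =
  match w with
  | [::] => false
  | Some i :: u => u \in words r' n
  | None :: z => z \in words_pred r' n
  end.
Proof.
rewrite /words /= mem_cat mem_words_tail // -/(words r' n) -/(words_pred r' n).
case: w => [|[i|] u].
- by apply/orP=> -[/mapP[]|].
- have -> : (Some i :: u \in map (cons (one ord0)) (words r' n)) =
            (i == ord0) && (u \in words r' n).
    by apply/mapP/andP=> [[x Hx [-> ->]]|[/eqP -> Hu]]; [|exists u].
  case: (u \in words r' n); rewrite ?andbF ?andbT //.
  case: i => [[|i] Hi]; first by rewrite orTb.
  by apply/orP; right; rewrite /= add1n ltnS; lia.
- by have -> : (None :: u \in map (cons (one ord0)) (words r' n)) = false
    by apply/mapP=> -[].
Qed.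

Lemma uniq_words r' n : uniq (words r' n) /\ uniq (words_pred r' n).
Proof.
elim: n => [|n [U1 U2]] //; split => //.
rewrite /words /= cat_uniq map_inj_uniq ?uniq_words_tail -/(words r' n) -/(words_pred r' n)
  ?U1 //= ?andbT; last by move=> x y [].
apply/hasPn => w; rewrite mem_words_tail //.
case: w => [|[i|] u] //.
  by case/andP=> Hi _; apply/mapP=> -[x _ [Hx _]]; move: Hi; rewrite Hx.
by move=> _; apply/mapP=> -[].
Qed.

Lemma rank_nil r : rank ([::] : seq (letter r)) = 0%N.
Proof. by rewrite /rank big_nil. Qed.

Lemma rank_cons r (a : letter r) w : rank (a :: w) = (lval a + rank w)%N.
Proof. by rewrite /rank big_cons. Qed.

Lemma mem_words r' n w : ((w \in words r' n) = (rank w == n)) /\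
   ((w \in words_pred r' n) = (0 < n)%N && (rank w == n.-1)).
Proof.
elim: n w => [|n IH] w.
  rewrite /words /words_pred /= in_nil inE; split => //.
  by case: w => [|a w]; rewrite ?rank_nil ?rank_cons //; case: a.
split; last by rewrite /words_pred /= -/(words r' n) (IH w).1.
rewrite mem_wordsS; case: w => [|[i|] u]; rewrite ?rank_nil ?rank_cons //=.
- by rewrite (IH u).1 add1n eqSS.
- by rewrite (IH u).2; case: n {IH} => [|n] //=; rewrite !eqSS.
Qed.

Lemma size_le_rank r (w : seq (letter r)) : (size w <= rank w)%N.
Proof.
elim: w => [|a w IH]; rewrite ?rank_nil ?rank_cons //=.
by case: a => [i|] /=; lia.
Qed.

Lemma mem_words_upto r n (w : seq (letter r)) : (size w <= n)%N -> w \in words_upto r n.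
Proof.
move=> Hw; apply/flatten_mapP; exists (size w); first by rewrite mem_iota.
by apply/mapP; exists (in_tuple w) => //; rewrite mem_enum.
Qed.

Lemma uniq_flatten_map_graded (T : eqType) (F : nat -> seq T) (g : T -> nat) s :
  uniq s -> (forall k, uniq (F k)) -> (forall k x, x \in F k -> g x = k) ->
  uniq (flatten [seq F k | k <- s]).
Proof.
move=> + UF Hg; elim: s => [|k s IH] //= /andP[ks Us].
rewrite cat_uniq UF IH // andbT /=; apply/hasPn => x /flatten_mapP[k' Hk' Hx].
by apply/negP => Hx'; move: ks; rewrite -(Hg _ _ Hx') (Hg _ _ Hx) Hk'.
Qed.

Lemma uniq_Pn r n : uniq (Pn r n).
Proof.
apply/filter_uniq/(@uniq_flatten_map_graded _ _ size); first exact: iota_uniq.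
  by move=> k; rewrite map_inj_uniq ?enum_uniq //; apply: val_inj.
by move=> k x /mapP[t _ ->]; rewrite size_tuple.
Qed.

Lemma mem_Pn r n (w : seq (letter r)) : (w \in Pn r n) = (rank w == n).
Proof.
rewrite mem_filter; case: eqP => //= H; apply: mem_words_upto.
by rewrite -H size_le_rank.
Qed.

Lemma perm_words_Pn r' n : perm_eq (words r' n) (Pn r'.+1 n).
Proof.
apply: uniq_perm; [exact: (uniq_words r' n).1|exact: uniq_Pn|].
by move=> w; rewrite mem_Pn (mem_words n w).1.
Qed.

Lemma p_nwords r' n : p r'.+1 n = nwords r' n.
Proof. by rewrite /p -(perm_size (perm_words_Pn r' n)) (size_words r' n).1. Qed.

Local Open Scope ring_scope.

Fixpoint stack_mx (R : pzRingType) (c a b : nat) (E : 'M[R]_(b, a)) :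
    'M[R]_(stack_rows c a b, a) :=
  if c is c'.+1 return 'M[R]_(stack_rows c a b, a) then col_mx 1%:M (stack_mx c' E)
  else E.

Fixpoint Uwords (R : pzRingType) (r' n : nat) : 'M[R]_(nwords r' n.+1, nwords r' n) :=
  if n is m.+1 return 'M[R]_(nwords r' n.+1, nwords r' n)
  then col_mx 1%:M (stack_mx r' (Uwords R r' m)^T)
  else col_mx 1%:M (stack_mx r' (0 : 'M[R]_(0, 1))).

Lemma split_ordP m n (i : 'I_(m + n)) :
  (exists k : 'I_m, i = lshift n k) \/ (exists k : 'I_n, i = rshift m k).
Proof. by case: (splitP i) => k Hk; [left|right]; exists k; apply: val_inj. Qed.

Lemma stack_mx_covers (R : pzRingType) r' (c a b : nat) (E : 'M[R]_(b, a)) ws vs j :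
  size ws = a -> size vs = b -> uniq ws -> (j + c <= r'.+1)%N ->
  (forall z x, E z x = (covers (two :: nth [::] vs z) (nth [::] ws x))%:R) ->
  forall i x,
    stack_mx c E i x = (covers (nth [::] (@words_tail r' j c ws vs) i) (nth [::] ws x))%:R.
Proof.
move=> Sws Svs Uws + HE; elim: c j => [|c IH] j Hc i x /=.
  by rewrite HE (nth_map [::]) // Svs.
case: (split_ordP i) => -[k ->].
  rewrite col_mxEu mxE nth_cat size_map Sws /= ltn_ord (nth_map [::]) ?Sws //.
  by rewrite covers_cons_one nth_uniq ?Sws // eq_sym.
rewrite col_mxEd (IH j.+1) ?addSnnS // nth_cat size_map Sws /= ltnNge leq_addr /=.
by rewrite addKn.
Qed.

Lemma col_stack_mx_covers (R : pzRingType) r' n (E : 'M[R]_(nwords_pred r' n, nwords r' n)) i j :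
   (forall z x, E z x =
      (covers (two :: nth [::] (words_pred r' n) z) (nth [::] (words r' n) x))%:R) ->
   (col_mx 1%:M (stack_mx r' E) : 'M_(nwords r' n.+1, nwords r' n)) i j =
     (covers (nth [::] (words r' n.+1) i) (nth [::] (words r' n) j))%:R.
Proof.
have [Sw Swp] := size_words r' n.
have top (k : 'I_(nwords r' n)) :
    nth [::] (words r' n.+1) k = one ord0 :: nth [::] (words r' n) k.
  by rewrite /words /= nth_cat size_map -/(words r' n) Sw ltn_ord (nth_map [::]) ?Sw.
have bot k : nth [::] (words r' n.+1) (nwords r' n + k) =
             nth [::] (words_tail 1 r' (words r' n) (words_pred r' n)) k.
  by rewrite /words /= nth_cat size_map -/(words r' n) Sw ltnNge leq_addr /= addKn.
move=> HE; case: (split_ordP i) => -[k ->].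
  rewrite col_mxEu mxE top covers_cons_one.
  by rewrite nth_uniq ?Sw ?(uniq_words r' n).1 // eq_sym.
rewrite col_mxEd bot; apply: stack_mx_covers => //; exact: (uniq_words r' n).1.
Qed.

Lemma Uwords_covers (R : pzRingType) r' n i j :
  Uwords R r' n i j = (covers (nth [::] (words r' n.+1) i) (nth [::] (words r' n) j))%:R.
Proof.
elim: n i j => [|n IH] i j; apply: col_stack_mx_covers => z x; first by case: z.
by rewrite mxE IH covers_cons_two.
Qed.

Definition words_perm_mx (R : pzRingType) r' n : 'M[R]_(p r'.+1 n, nwords r' n) :=
  \matrix_(i, j) (nth [::] (Pn r'.+1 n) i == nth [::] (words r' n) j)%:R.

Lemma sum_nth_eq_mulr (R : pzRingType) (T : eqType) m (s : seq T) x0 (k : 'I_m) w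
    (F : 'I_m -> R) :
  uniq s -> size s = m -> nth x0 s k = w ->
  \sum_(i < m) (nth x0 s i == w)%:R * F i = F k.
Proof.
move=> Us Ss Hk; rewrite (bigD1 k) //= Hk eqxx mul1r big1 ?addr0 // => i Hi.
rewrite -Hk nth_uniq ?Ss //; case: eqP => [/val_inj Hik|]; last by rewrite mul0r.
by rewrite Hik eqxx in Hi.
Qed.

Lemma sum_mulr_nth_eq (R : pzRingType) (T : eqType) m (s : seq T) x0 (k : 'I_m) w
    (F : 'I_m -> R) :
  uniq s -> size s = m -> nth x0 s k = w ->
  \sum_(i < m) F i * (nth x0 s i == w)%:R = F k.
Proof.
move=> Us Ss Hk; rewrite (bigD1 k) //= Hk eqxx mulr1 big1 ?addr0 // => i Hi.
rewrite -Hk nth_uniq ?Ss //; case: eqP => [/val_inj Hik|]; last by rewrite mulr0.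
by rewrite Hik eqxx in Hi.
Qed.

Lemma words_index r' n (w : seq (letter r'.+1)) : w \in Pn r'.+1 n ->
  exists k : 'I_(nwords r' n), nth [::] (words r' n) k = w.
Proof.
rewrite -(perm_mem (perm_words_Pn r' n)) => Hw.
have Hi : (index w (words r' n) < nwords r' n)%N by rewrite -(size_words r' n).1 index_mem.
by exists (Ordinal Hi); rewrite nth_index.
Qed.

Lemma Pn_index r' n (k : 'I_(nwords r' n)) :
  exists y : 'I_(p r'.+1 n), nth [::] (Pn r'.+1 n) y = nth [::] (words r' n) k.
Proof.
have Hw : nth [::] (words r' n) k \in Pn r'.+1 n.
  by rewrite -(perm_mem (perm_words_Pn r' n)) mem_nth // (size_words r' n).1.
have Hi : (index (nth [::] (words r' n) k) (Pn r'.+1 n) < p r'.+1 n)%N by rewrite index_mem.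
by exists (Ordinal Hi); rewrite nth_index.
Qed.

Lemma mulmx_tr_words_perm (R : pzRingType) r' n :
  (words_perm_mx R r' n)^T *m words_perm_mx R r' n = 1%:M.
Proof.
apply/matrixP => i j; rewrite !mxE.
have [y Hy] := Pn_index i.
under eq_bigr => k _ do rewrite !mxE.
rewrite (@sum_nth_eq_mulr _ _ _ _ _ y) ?uniq_Pn // Hy.
by rewrite nth_uniq ?(size_words r' n).1 ?(uniq_words r' n).1.
Qed.

Lemma mulmx_words_perm_tr (R : pzRingType) r' n :
  words_perm_mx R r' n *m (words_perm_mx R r' n)^T = 1%:M.
Proof.
apply/matrixP => i j; rewrite !mxE.
have [k Hk] := words_index (mem_nth [::] (ltn_ord i)).
under eq_bigr => l _ do rewrite !mxE eq_sym.
rewrite (@sum_nth_eq_mulr _ _ _ _ _ k) ?(uniq_words r' n).1 ?(size_words r' n).1 // Hk.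
by rewrite nth_uniq ?uniq_Pn // eq_sym.
Qed.

Lemma Umx_Uwords r' n :
  Umx r'.+1 n = words_perm_mx int r' n.+1 *m Uwords int r' n *m (words_perm_mx int r' n)^T.
Proof.
apply/matrixP => y x; rewrite !mxE.
have [k Hk] := words_index (mem_nth [::] (ltn_ord x)).
under eq_bigr => l _ do rewrite !mxE [_ == _]eq_sym.
rewrite (@sum_mulr_nth_eq _ _ _ _ _ k) ?(uniq_words r' n).1 ?(size_words r' n).1 //.
have [k' Hk'] := words_index (mem_nth [::] (ltn_ord y)).
under eq_bigr => l _ do rewrite !mxE eq_sym.
rewrite (@sum_nth_eq_mulr _ _ _ _ _ k') ?(uniq_words r' n.+1).1 ?(size_words r' n.+1).1 //.
by rewrite Uwords_covers Hk Hk'; case: covers.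
Qed.

(* (-X  I) is onto, with kernel the image of (I; X). *)
Lemma coker_free_col1 (m k : nat) (X : 'M[int]_(k, m)) :
  coker_free (col_mx (1%:M : 'M_m) X).
Proof.
exists k, (row_mx (- X) 1%:M); split.
  by move=> y; exists (col_mx 0 y); rewrite mul_row_col mulmx0 add0r mul1mx.
move=> x; rewrite -[x]vsubmxK mul_row_col mul1mx mulNmx; split.
  move/eqP; rewrite addrC subr_eq0 => /eqP ->.
  by exists (usubmx x); rewrite mul_col_mx mul1mx.
by case=> v; rewrite mul_col_mx mul1mx => /eq_col_mx [-> ->]; rewrite addNr.
Qed.

Lemma coker_free_orth (m n m' n' : nat) (A : 'M[int]_(m, n)) (P : 'M[int]_(m', m))
    (Q : 'M[int]_(n', n)) :
  P^T *m P = 1%:M -> P *m P^T = 1%:M -> Q^T *m Q = 1%:M ->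
  coker_free A -> coker_free (P *m A *m Q^T).
Proof.
move=> HP HP' HQ [k [F [Fsurj Fker]]]; exists k, (F *m P^T); split.
  move=> y; have [x Hx] := Fsurj y; exists (P *m x).
  by rewrite -mulmxA (mulmxA P^T) HP mul1mx.
move=> x; rewrite -mulmxA; split.
  move/Fker => [v Hv]; exists (Q *m v).
  by rewrite -!mulmxA (mulmxA Q^T) HQ mul1mx -Hv mulmxA HP' mul1mx.
case=> v ->; apply/Fker; exists (Q^T *m v).
by rewrite !mulmxA HP mul1mx.
Qed.

Lemma coker_free_Umx r' n : coker_free (Umx r'.+1 n).
Proof.
rewrite Umx_Uwords; apply: coker_free_orth;
  rewrite ?mulmx_tr_words_perm ?mulmx_words_perm_tr //.
by case: n => [|n] /=; apply: coker_free_col1.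
Qed.

Lemma stack_rowsE c a b : stack_rows c a b = (c * a + b)%N.
Proof. by elim: c => [|c IH] //=; rewrite IH mulSn addnA. Qed.

Lemma nwords1 r' : nwords r' 1 = r'.+1.
Proof. by rewrite /nwords /= stack_rowsE; lia. Qed.

Lemma nwordsSS r' n : nwords r' n.+2 = (r'.+1 * nwords r' n.+1 + nwords r' n)%N.
Proof.
have -> : nwords r' n.+2 = (nwords r' n.+1 + stack_rows r' (nwords r' n.+1) (nwords r' n))%N by [].
by rewrite stack_rowsE; lia.
Qed.

Lemma leq_nwordsS r' n : (nwords r' n <= nwords r' n.+1)%N.
Proof. by case: n => [|n]; rewrite ?nwords1 ?nwordsSS //; lia. Qed.

Lemma leq_nwords r' : {homo nwords r' : m n / (m <= n)%N}.
Proof. exact: homo_leq leqnn leq_trans (leq_nwordsS r'). Qed.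

Lemma dp_nat r' k :
  dp r'.+1 k%:Z = if k is k'.+1 then (nwords r' k)%:Z - (nwords r' k')%:Z else 1.
Proof.
rewrite /dp; case: k => [|k]; first by rewrite /pz p_nwords.
have -> : (k.+1)%:Z - 1 = k%:Z by rewrite -addn1 PoszD addrK.
by rewrite /pz !p_nwords.
Qed.

Lemma dp_ge0 r' n : 0 <= dp r'.+1 n.
Proof.
case: n => [n|//]; rewrite dp_nat; case: n => [|n] //.
by have := leq_nwordsS r' n; lia.
Qed.

(* For r >= 2 the recurrence p_{n+2} = r p_{n+1} + p_n makes Delta p nondecreasing. *)
Lemma dp_monotone r'' (m n : int) : m <= n -> 0 <= n -> dp r''.+2 m <= dp r''.+2 n.
Proof.
have step k : dp r''.+2 k%:Z <= dp r''.+2 k.+1%:Z.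
  rewrite !dp_nat; case: k => [|k]; first by rewrite nwords1.
  rewrite nwordsSS; have := leq_nwordsS r''.+1 k; lia.
have mono := homo_leq (@lexx _ int) (fun _ _ _ => @le_trans _ _ _ _ _) step.
case: m => [m|m] lemn; last by rewrite dp_ge0.
by case: n lemn => [n|//] lemn _; apply: mono; lia.
Qed.

(* For r = 1, Delta p = 1, 0, 1, 1, 2, 3, 5, ...: the shift by 2 absorbs the dip at 1. *)
Lemma dp1_nwords k : dp 1 k.+2%:Z = (nwords 0 k)%:Z.
Proof. by rewrite dp_nat nwordsSS; lia. Qed.

Lemma dp1_le_nwords k : dp 1 k%:Z <= (nwords 0 k)%:Z.
Proof.
case: k => [|[|k]]; first by rewrite dp_nat.
  by rewrite dp_nat nwords1.
by rewrite dp1_nwords lez_nat; apply: leq_nwords; rewrite !leqW.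
Qed.

Lemma dp1_monotone (m n : int) : m <= n - 2 -> 0 <= n -> dp 1 m <= dp 1 n.
Proof.
case: m => [m|m] lemn; last by rewrite dp_ge0.
case: n lemn => [[|[|n]]|//] lemn _; try lia.
rewrite dp1_nwords; apply: le_trans (dp1_le_nwords m) _.
by rewrite lez_nat; apply: leq_nwords; lia.
Qed.

Lemma dp_shift_le r' n j : (1 <= j <= n)%N ->
  dp r'.+1 (n%:Z - j%:Z - (r'.+1 == 1%N)%:Z) <= dp r'.+1 n%:Z.
Proof.
case: r' => [|r''] /andP[Hj Hjn] /=; first by apply: dp1_monotone; lia.
by apply: dp_monotone; lia.
Qed.

Section SmithForm.

Variable S : comUnitRingType.
Implicit Types (c d f al be : S).

Ltac mxsimp := rewrite ?mulmx0 ?mul0mx ?mulmx1 ?mul1mx ?addr0 ?add0r ?subr0 ?sub0r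
  ?mulNmx ?mulmxN ?opprK ?mul_scalar_mx ?mul_mx_scalar ?trmx1 ?trmx0 ?tr_scalar_mx ?scaler0.

Lemma has_smith_form_small n (A : 'M[S]_n) : (n <= 1)%N -> has_smith_form A.
Proof.
move=> Hn; exists 1%:M, 1%:M; do 2!(split; first exact: unitmx1).
split=> i j Hij; last by move: (ltn_ord i) (ltn_ord j); lia.
suff Eij : i = j by rewrite Eij eqxx in Hij.
by apply/ord_inj; move: (ltn_ord i) (ltn_ord j); lia.
Qed.

Lemma has_smith_form_equiv n (A P Q : 'M[S]_n) :
  P \in unitmx -> Q \in unitmx -> has_smith_form (P *m A *m Q) -> has_smith_form A.
Proof.
move=> HP HQ [P' [Q' [HP' [HQ' Hs]]]]; exists (P' *m P), (Q *m Q').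
rewrite !unitmx_mul HP HP' HQ HQ'; do 2!split => //; by move: Hs; rewrite !mulmxA.
Qed.

Lemma has_smith_form_orth m m' (e : m = m') (R : 'M[S]_(m', m)) (A : 'M[S]_m) :
  R^T *m R = 1%:M -> has_smith_form A -> has_smith_form (R *m A *m R^T).
Proof.
case: m' / e in R * => HR [P [Q [HP [HQ Hs]]]].
have [HRT HRu] := mulmx1_unit HR.
exists (P *m R^T), (R *m Q); rewrite !unitmx_mul HP HQ HRT HRu; do 2!split => //.
by rewrite !mulmxA -(mulmxA P) HR mulmx1 -(mulmxA _ R^T) HR mulmx1.
Qed.

Lemma has_smith_formZ n (A : 'M[S]_n) c : has_smith_form A -> has_smith_form (c *: A).
Proof.
case=> P [Q [HP [HQ [Hd Hc]]]]; exists P, Q; do 2!split => //.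
rewrite -scalemxAr -scalemxAl; set T := P *m A *m Q in Hd Hc *; split=> i j H.
  by rewrite mxE (Hd i j H) mulr0.
by have [x Hx] := Hc i j H; exists x; rewrite [LHS]mxE [in RHS]mxE Hx mulrCA.
Qed.

Lemma unitmx_block1 m n (X : 'M[S]_n) :
  X \in unitmx -> block_mx (1%:M : 'M_m) 0 0 X \in unitmx.
Proof. by rewrite !unitmxE det_ublock det1 mul1r. Qed.

Lemma unitmx_block1r m n (X : 'M[S]_m) :
  X \in unitmx -> block_mx X 0 0 (1%:M : 'M_n) \in unitmx.
Proof. by rewrite !unitmxE det_ublock det1 mulr1. Qed.

Lemma unitmx_lblock1 m n (X : 'M[S]_(n, m)) :
  block_mx (1%:M : 'M_m) 0 X (1%:M : 'M_n) \in unitmx.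
Proof. by rewrite unitmxE det_lblock !det1 mulr1 unitr1. Qed.

Lemma unitmx_ublock1 m n (X : 'M[S]_(m, n)) :
  block_mx (1%:M : 'M_m) X 0 (1%:M : 'M_n) \in unitmx.
Proof. by rewrite unitmxE det_ublock !det1 mulr1 unitr1. Qed.

(* Leading unit entries divide everything, so they may be prepended. *)
Lemma has_smith_form_block1 k m (A : 'M[S]_m) :
  has_smith_form A -> has_smith_form (block_mx (1%:M : 'M_k) 0 0 A).
Proof.
case=> P [Q [HP [HQ [Hd Hc]]]].
exists (block_mx 1%:M 0 0 P), (block_mx 1%:M 0 0 Q).
rewrite !unitmx_block1 //; do 2!split => //.
rewrite !mulmx_block; mxsimp; mxsimp; set T := P *m A *m Q.
have E (i j : 'I_(k + m)) : block_mx (1%:M : 'M_k) 0 0 T i j =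
    match split i, split j with
    | inl i', inl j' => (i' == j')%:R
    | inr i', inr j' => T i' j'
    | _, _ => 0
    end.
  rewrite /block_mx /row_mx /col_mx mxE.
  by case: split => i'; rewrite mxE; case: split => j'; rewrite !mxE.
split=> i j; rewrite !E; case: (splitP i) => i' Hi; case: (splitP j) => j' Hj //.
- move=> Hne; suff /negbTE-> : i' != j' by [].
  by apply: contra Hne => /eqP Hij; apply/eqP/ord_inj; rewrite Hi Hj Hij.
- by move=> Hne; apply: Hd; apply: contra Hne => /eqP Hij; apply/eqP/ord_inj; rewrite Hi Hj Hij.
- by exists 1; rewrite !eqxx mulr1.
- by exists (T j' j'); rewrite eqxx mulr1.
- by move: (ltn_ord j'); lia.
- by move=> Hji; apply: Hc; move: Hji; rewrite Hi Hj; lia.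
Qed.

Lemma has_smith_form_swap m1 m2 (A : 'M[S]_m1) (B : 'M[S]_m2) :
  has_smith_form (block_mx A 0 0 B) -> has_smith_form (block_mx B 0 0 A).
Proof.
move=> H; have := @has_smith_form_orth (m1 + m2) (m2 + m1) (addnC _ _)
   (block_mx 0 (1%:M : 'M_m2) (1%:M : 'M_m1) 0) _ _ H.
rewrite tr_block_mx !trmx0 trmx1 !mulmx_block; mxsimp; mxsimp.
by apply; rewrite -scalar_mx_block.
Qed.

Lemma has_smith_form_add_col1_mul_tr p m (Z : 'M[S]_(m, p)) c :
  has_smith_form (block_mx (c%:M + (col_mx 1%:M Z)^T *m col_mx 1%:M Z) Z^T 0 c%:M) ->
  has_smith_form (c%:M + col_mx (1%:M : 'M_p) Z *m (col_mx 1%:M Z)^T).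
Proof.
set U := col_mx (1%:M : 'M_p) Z => H.
apply: (has_smith_form_equiv (unitmx_lblock1 (- Z)) (unitmx_lblock1 Z)).
suff -> : block_mx 1%:M 0 (- Z) 1%:M *m (c%:M + U *m U^T) *m block_mx 1%:M 0 Z 1%:M =
          block_mx (c%:M + U^T *m U) Z^T 0 c%:M by [].
rewrite /U tr_col_mx mul_col_row mul_row_col trmx1 (scalar_mx_block p m c) add_block_mx.
rewrite !mulmx_block; mxsimp; mxsimp.
have -> : - (Z *m Z^T) + (c%:M + Z *m Z^T) = c%:M by rewrite addrCA addNr addr0.
by rewrite mul_scalar_mx mulmxDr mulmx1 mul_mx_scalar opprD subrK addNr addrA.
Qed.

(* Using the identity block, row and column operations clear W and turn A
   into -c A, so the result is equivalent to 1 (+) c ((-A) (+) 1). *)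
Lemma has_smith_form_block_row1 p k (A : 'M[S]_p) (W : 'M[S]_(p, k)) c :
  has_smith_form A -> has_smith_form (block_mx A (row_mx 1%:M W) 0 (c%:M : 'M_(p + k))).
Proof.
move=> HA.
apply: (has_smith_form_equiv (unitmx_block1 _ (unitmx_ublock1 W))
                             (unitmx_block1 _ (unitmx_ublock1 (- W)))).
have -> : block_mx 1%:M 0 0 (block_mx 1%:M W 0 1%:M) *m
            block_mx A (row_mx (1%:M : 'M_p) W) 0 (c%:M : 'M_(p + k)) *m
          block_mx 1%:M 0 0 (block_mx 1%:M (- W) 0 1%:M) =
          block_mx A (row_mx (1%:M : 'M_p) 0) 0 (c%:M : 'M_(p + k)).
  rewrite !mulmx_block; mxsimp; mxsimp; rewrite mul_row_block; mxsimp; rewrite addNr.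
  by rewrite -scalemxAl mulmx_block; mxsimp; mxsimp; rewrite addNr -scalar_mx_block scalemx1.
apply: (has_smith_form_equiv (unitmx_lblock1 (- (c *: col_mx (1%:M : 'M_p) (0 : 'M_(k, p)))))
                             (unitmx_lblock1 (col_mx (- A) (0 : 'M_(k, p))))).
pose Q : 'M[S]_(p + (p + k)) := block_mx (0 : 'M_p) (row_mx (1%:M : 'M_p) (0 : 'M_(p, k)))
           (col_mx (1%:M : 'M_p) (0 : 'M_(k, p))) (block_mx (0 : 'M_p) 0 0 (1%:M : 'M_k)).
have QQ : Q *m Q = 1%:M.
  rewrite /Q !mulmx_block; mxsimp; mxsimp.
  rewrite !mul_row_col !mul_col_row ?mul_row_block ?mul_block_col; mxsimp; mxsimp.
  by rewrite !add_block_mx; mxsimp; mxsimp; rewrite row_mx0 col_mx0 -!scalar_mx_block.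
apply: (has_smith_form_equiv (unitmx1 _ _) (mulmx1_unit QQ).1); rewrite mul1mx.
have -> : block_mx 1%:M 0 (- (c *: col_mx (1%:M : 'M_p) (0 : 'M_(k, p)))) 1%:M *m
            block_mx A (row_mx (1%:M : 'M_p) 0) 0 (c%:M : 'M_(p + k)) *m
          block_mx 1%:M 0 (col_mx (- A) (0 : 'M_(k, p))) 1%:M =
          block_mx 0 (row_mx (1%:M : 'M_p) (0 : 'M_(p, k))) (col_mx (- (c *: A)) 0)
            (block_mx (0 : 'M_p) 0 0 (c%:M : 'M_k)).
  rewrite !mulmx_block; mxsimp; mxsimp.
  rewrite mul_row_col -!scalemxAl mul_col_row; mxsimp; rewrite addrN.
  rewrite (scalar_mx_block p k c) scale_block_mx scalemx1 !scaler0 opp_block_mx !oppr0.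
  rewrite add_block_mx addNr !addr0 add0r mul_block_col; mxsimp; mxsimp.
  by rewrite col_mx0 addr0 mul_col_mx mul1mx mul0mx scale_col_mx opp_col_mx scaler0 oppr0.
have -> : block_mx 0 (row_mx (1%:M : 'M_p) (0 : 'M_(p, k))) (col_mx (- (c *: A)) 0)
            (block_mx (0 : 'M_p) 0 0 (c%:M : 'M_k)) *m Q =
          block_mx 1%:M 0 0 (c *: block_mx (- A) 0 0 (1%:M : 'M_k)).
  rewrite /Q !mulmx_block; mxsimp; mxsimp.
  rewrite !mul_row_col !mul_col_row ?mul_row_block ?mul_block_col; mxsimp; mxsimp.
  rewrite !add_block_mx; mxsimp; mxsimp.
  by rewrite row_mx0 col_mx0 scale_block_mx scalerN !scaler0 scalemx1.
apply/has_smith_form_block1/has_smith_formZ/has_smith_form_swap/has_smith_form_block1.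
by rewrite -scaleN1r; apply: has_smith_formZ.
Qed.

Lemma has_smith_form_add_col2_mul_tr p k (Y : 'M[S]_(k, p)) c :
  let U := col_mx (1%:M : 'M_p) (col_mx (1%:M : 'M_p) Y) in
  has_smith_form (c%:M + U^T *m U) -> has_smith_form (c%:M + U *m U^T).
Proof.
move=> U HA; apply: has_smith_form_add_col1_mul_tr.
by rewrite [X in block_mx _ X]tr_col_mx trmx1; apply: has_smith_form_block_row1.
Qed.

(* For r = 1 the matrices c + U_n^T U_n reduce (via [has_smith_form_add_col1_mul_tr])
   to [phi_mx 1 (c + 1) U_{n-2}], and the reduction below passes from
   [phi_mx d f] to [phi_mx f (f + 1)]: consecutive parameters stay coprime. *)
Definition phi_mx m1 m2 d f (V : 'M[S]_(m1, m2)) : 'M[S]_(m1 + m2) :=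
  block_mx (d *: ((f + 1)%:M + V *m V^T)) (d *: V) 0 f%:M.

Ltac mxring G :=
  rewrite -?scalemxAr ?mulmxDr ?mulmxDl -?scalemxAl ?mul_mx_scalar ?mul_scalar_mx
    ?mulmx1 ?mul1mx -/G;
  apply/matrixP => i j; rewrite !mxE; ring.

Lemma phi_mx_col1_clear b b' (Y : 'M[S]_(b', b)) d f :
  block_mx (block_mx 1%:M 0 (- Y) 1%:M) 0 0 1%:M *m phi_mx d f (col_mx (1%:M : 'M_b) Y) *m
    block_mx 1%:M 0 (row_mx (- (f + 2))%:M (0 : 'M_(b, b'))) 1%:M =
  block_mx (block_mx 0 (d *: Y^T) ((- (d * (f + 1))) *: Y) (d * (f + 1))%:M)
     (col_mx d%:M 0) (row_mx (- (f * (f + 2)))%:M 0) f%:M.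
Proof.
have -> : block_mx (block_mx 1%:M 0 (- Y) 1%:M) 0 0 1%:M *m phi_mx d f (col_mx (1%:M : 'M_b) Y) =
    block_mx (block_mx (d * (f + 2))%:M (d *: Y^T) ((- (d * (f + 1))) *: Y) (d * (f + 1))%:M)
      (col_mx d%:M 0) 0 f%:M.
  rewrite /phi_mx tr_col_mx trmx1 mul_col_row (scalar_mx_block b b' (f + 1)) add_block_mx.
  rewrite scale_block_mx scale_col_mx !mulmx_block; mxsimp; mxsimp.
  rewrite mul_block_col; mxsimp; mxsimp; set G := Y *m Y^T.
  by congr block_mx; [congr block_mx|congr col_mx]; mxring G.
rewrite !mulmx_block; mxsimp; mxsimp; rewrite mul_col_row; mxsimp; mxsimp.
rewrite add_block_mx; mxsimp; rewrite scale_row_mx scaler0; set G := Y *m Y^T.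
by congr block_mx; [congr block_mx|congr row_mx]; mxring G.
Qed.

Lemma phi_mx_bezout_rows b b' (Y : 'M[S]_(b', b)) d f al be :
  al * d + be * f = 1 ->
  block_mx (block_mx f%:M 0 0 1%:M) (col_mx (- d)%:M 0) (row_mx al%:M 0) be%:M *m
    block_mx (block_mx 0 (d *: Y^T) ((- (d * (f + 1))) *: Y) (d * (f + 1))%:M)
      (col_mx d%:M 0) (row_mx (- (f * (f + 2)))%:M (0 : 'M_(b, b'))) f%:M =
  block_mx (block_mx (d * f * (f + 2))%:M ((d * f) *: Y^T)
                     ((- (d * (f + 1))) *: Y) (d * (f + 1))%:M)
    0 (row_mx (- (be * f * (f + 2)))%:M ((al * d) *: Y^T)) (1%:M : 'M_b).
Proof.
move=> Hbez; rewrite !mulmx_block; mxsimp; mxsimp.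
rewrite !mul_block_col !mul_row_block !mul_col_row !mul_row_col; mxsimp; mxsimp.
rewrite !add_block_mx !scale_col_mx !add_col_mx !scale_row_mx !add_row_mx; mxsimp; mxsimp.
set G := Y *m Y^T; congr block_mx.
- by congr block_mx; mxring G.
- by apply/eqP; rewrite col_mx_eq0; apply/andP; split; apply/eqP; mxring G.
- by congr row_mx; mxring G.
- by rewrite -Hbez; mxring G.
Qed.

(* Its inverse has the same shape, with (f, -d; al, be) replaced by (be, d; -al, f). *)
Lemma bezout_rows_unitmx b b' d f al be :
  al * d + be * f = 1 ->
  block_mx (block_mx f%:M 0 0 (1%:M : 'M_b')) (col_mx (- d)%:M 0) (row_mx al%:M 0)
    (be%:M : 'M_b) \in unitmx.
Proof.
move=> Hbez; apply: (proj1 (@mulmx1_unit _ _ _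
  (block_mx (block_mx be%:M 0 0 (1%:M : 'M_b')) (col_mx d%:M 0) (row_mx (- al)%:M 0)
     (f%:M : 'M_b)) _)).
rewrite !mulmx_block; mxsimp; mxsimp.
rewrite !mul_block_col !mul_row_block !mul_col_row !mul_row_col; mxsimp; mxsimp.
rewrite !add_block_mx ?scale_col_mx ?scale_row_mx ?add_col_mx ?add_row_mx; mxsimp; mxsimp.
rewrite (scalar_mx_block (b + b') b) (scalar_mx_block b b').
congr block_mx.
- by congr block_mx; apply/matrixP => i j; rewrite !mxE -?Hbez; ring.
- by apply/eqP; rewrite col_mx_eq0; apply/andP; split; apply/eqP;
    apply/matrixP => i j; rewrite !mxE; ring.
- by apply/eqP; rewrite row_mx_eq0; apply/andP; split; apply/eqP;
    apply/matrixP => i j; rewrite !mxE; ring.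
- by apply/matrixP => i j; rewrite !mxE -Hbez; ring.
Qed.

Lemma phi_mx_tr_recover b b' (Y : 'M[S]_(b', b)) d f (L : 'M[S]_(b, b + b')) :
  block_mx (block_mx (d * f * (f + 2))%:M ((d * f) *: Y^T)
                     ((- (d * (f + 1))) *: Y) (d * (f + 1))%:M) 0 L (1%:M : 'M_b) *m
    block_mx 1%:M 0 (- L) 1%:M *m block_mx (block_mx 1%:M 0 Y 1%:M) 0 0 1%:M =
  block_mx (d *: phi_mx f (f + 1) Y^T) 0 0 1%:M.
Proof.
rewrite [_ *m block_mx 1%:M 0 (- L) _]mulmx_block; mxsimp; mxsimp; rewrite addrN.
rewrite mulmx_block; mxsimp; mxsimp; rewrite /phi_mx trmxK mulmx_block; mxsimp; mxsimp.
rewrite scale_block_mx scaler0; set G := Y^T *m Y.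
by congr block_mx; congr block_mx; mxring G.
Qed.

Lemma has_smith_form_phi_col1 b b' (Y : 'M[S]_(b', b)) d f al be :
  al * d + be * f = 1 -> has_smith_form (phi_mx f (f + 1) Y^T) ->
  has_smith_form (phi_mx d f (col_mx (1%:M : 'M_b) Y)).
Proof.
move=> Hbez HY.
apply: (has_smith_form_equiv (unitmx_block1r _ (unitmx_lblock1 (- Y)))
                             (unitmx_lblock1 (row_mx (- (f + 2))%:M (0 : 'M_(b, b'))))).
rewrite phi_mx_col1_clear.
apply: (has_smith_form_equiv (bezout_rows_unitmx b b' Hbez) (unitmx1 _ _)).
rewrite mulmx1 phi_mx_bezout_rows //.
set L := row_mx _ _.
apply: (has_smith_form_equiv (unitmx1 _ _) (unitmx_lblock1 (- L))).
apply: (has_smith_form_equiv (unitmx1 _ _) (unitmx_block1r _ (unitmx_lblock1 Y))).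
rewrite !mul1mx phi_mx_tr_recover.
by apply/has_smith_form_swap/has_smith_form_block1/has_smith_formZ.
Qed.

End SmithForm.

Lemma stack_mx_tr_mul (R : comPzRingType) c a b (E : 'M[R]_(b, a)) :
  (stack_mx c E)^T *m stack_mx c E = (c%:R)%:M + E^T *m E.
Proof.
elim: c => [|c IH] /=; first by rewrite mulr0n raddf0 add0r.
by rewrite tr_col_mx mul_row_col trmx1 mul1mx IH addrA -raddfD -natr1 (addrC 1).
Qed.

Lemma Uwords_tr_mulS (R : comPzRingType) r' n :
  (Uwords R r' n.+1)^T *m Uwords R r' n.+1 = (r'.+1%:R)%:M + Uwords R r' n *m (Uwords R r' n)^T.
Proof.
rewrite [Uwords R r' n.+1]/= tr_col_mx mul_row_col trmx1 mul1mx stack_mx_tr_mul trmxK.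
by rewrite addrA -raddfD -natr1 (addrC 1).
Qed.

Lemma Uwords_col2 (R : pzRingType) r'' n :
  exists Y : 'M[R]_(stack_rows r'' (nwords r''.+1 n) (nwords_pred r''.+1 n), nwords r''.+1 n),
  Uwords R r''.+1 n = col_mx 1%:M (col_mx 1%:M Y).
Proof. by case: n => [|n] /=; eexists. Qed.

Lemma has_smith_form_Uwords_tr_mul_ge2 (S : comUnitRingType) r'' n (c : S) :
  has_smith_form (c%:M + (Uwords S r''.+1 n)^T *m Uwords S r''.+1 n).
Proof.
elim: n c => [|n IH] c; first exact: has_smith_form_small.
rewrite Uwords_tr_mulS addrA -raddfD.
have [Y E] := Uwords_col2 S r'' n.
by rewrite E; apply: has_smith_form_add_col2_mul_tr; rewrite -E.
Qed.

Lemma has_smith_form_phi_Uwords1 (S : comUnitRingType) n (d f al be : S) :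
  al * d + be * f = 1 -> has_smith_form (phi_mx d f (Uwords S 0 n)).
Proof.
elim: n d f al be => [|n IH] d f al be Hbez; apply: (has_smith_form_phi_col1 Hbez).
  exact: has_smith_form_small.
by rewrite trmxK; apply: (IH _ _ (-1) 1); rewrite mulN1r mul1r addKr.
Qed.

Lemma has_smith_form_Uwords_tr_mul_1 (S : comUnitRingType) n (c : S) :
  has_smith_form (c%:M + (Uwords S 0 n)^T *m Uwords S 0 n).
Proof.
case: n => [|[|n]]; try exact: has_smith_form_small.
rewrite Uwords_tr_mulS addrA -raddfD [Uwords S 0 n.+1]/=.
apply: has_smith_form_add_col1_mul_tr.
rewrite -[col_mx _ _]/(Uwords S 0 n.+1) Uwords_tr_mulS trmxK addrA -raddfD.
have -> : block_mx ((c + 1%:R + 1%:R)%:M + Uwords S 0 n *m (Uwords S 0 n)^T)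
            (Uwords S 0 n) 0 (c + 1%:R)%:M = phi_mx 1 (c + 1%:R) (Uwords S 0 n).
  by rewrite /phi_mx !scale1r.
by apply: (has_smith_form_phi_Uwords1 _ (al := 1) (be := 0)); rewrite mulr1 mul0r addr0.
Qed.

Lemma map_words_perm_mx r' n :
  map_mx polyC (words_perm_mx int r' n) = words_perm_mx {poly int} r' n.
Proof. by apply/matrixP => i j; rewrite !mxE; case: (_ == _). Qed.

Lemma map_Uwords r' n : map_mx polyC (Uwords int r' n) = Uwords {poly int} r' n.
Proof. by apply/matrixP => i j; rewrite !mxE !Uwords_covers; case: covers. Qed.

Lemma DUt_Uwords r' n : DUt r'.+1 n =
  words_perm_mx _ r' n *m ('X%:M + (Uwords _ r' n)^T *m Uwords _ r' n) *m
  (words_perm_mx _ r' n)^T.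
Proof.
rewrite /DUt /DUmx Umx_Uwords !trmx_mul trmxK.
rewrite -!mulmxA (mulmxA (words_perm_mx int r' n.+1)^T) mulmx_tr_words_perm mul1mx !mulmxA.
rewrite !map_mxM -!map_trmx map_words_perm_mx map_Uwords mulmxDr mulmxDl addrC.
congr (_ + _); last by rewrite !mulmxA.
by rewrite mul_mx_scalar -scalemxAl mulmx_words_perm_tr scalemx1.
Qed.

Lemma has_smith_form_DUt r' n : has_smith_form (DUt r'.+1 n).
Proof.
rewrite DUt_Uwords; apply: (has_smith_form_orth (esym (p_nwords r' n))).
  exact: mulmx_tr_words_perm.
case: r' => [|r'']; [exact: has_smith_form_Uwords_tr_mul_1|exact: has_smith_form_Uwords_tr_mul_ge2].
Qed.

Theorem theorem5p1 (r : nat) (hr : (1 <= r)%N) :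
  (forall n : nat, has_smith_form (DUt r n)) /\
  (forall n j : nat, (1 <= n)%N -> (1 <= j <= n)%N ->
     dp r (n%:Z - j%:Z - (r == 1%N)%:Z) <= dp r n%:Z) /\
  (forall n : nat, coker_free (Umx r n)).
Proof.
case: r hr => [//|r'] _; split; first exact: has_smith_form_DUt.
by split=> [n j _|]; [exact: dp_shift_le|exact: coker_free_Umx].
Qed.
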